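(* Let $X$ be a locally compact Hausdorff space. The category $\mathsf{Point}_X$ of pointed extensions of $X$ has the following properties: it is a poset; it admits small colimits, in particular it has an initial object; it admits small limits, in particular it has a final object; and products distribute over small colimits.
   Context: A pointed extension $X_\ast$ of $X$ is a compactly generated Hausdorff topology on the underlying set of $\ast\amalg X$ extending the given topology on $X$. $\mathsf{Point}_X$ is the full subcategory of the undercategory $\mathrm{Top}^{X_+/}$ (where $X_+$ is $X$ with a disjoint basepoint) consisting of the pointed extensions of $X$. *)

From HB Require Import structures.
From mathcomp Require Import all_boot all_order.
From mathcomp Require Import boolp classical_sets functions cardinality topology.
From Stdlib Require Import ProofIrrelevance.
Set Implicit Arguments. Unset Strict Implicit. Unset Printing Implicit Defensive.
Local Open Scope classical_set_scope.

Record category := Category {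
  Obj :> Type;
  Hom : Obj -> Obj -> Type;
  idm : forall a, Hom a a;
  comp : forall x y z, Hom y z -> Hom x y -> Hom x z;
  comp_idl : forall a b (f : Hom a b), comp (idm b) f = f;
  comp_idr : forall a b (f : Hom a b), comp f (idm a) = f;
  compA : forall a b c d (f : Hom a b) (g : Hom b c) (h : Hom c d),
      comp h (comp g f) = comp (comp h g) f }.

Arguments Hom {_} _ _.
Arguments idm {_} _.
Arguments comp {_ _ _ _} _ _.

Record functor (J C : category) := Functor {
  fobj :> J -> C;
  fmap : forall j k, Hom j k -> Hom (fobj j) (fobj k);
  fmap_id : forall j, fmap (idm j) = idm (fobj j);
  fmap_comp : forall j k l (u : Hom j k) (v : Hom k l),
      fmap (comp v u) = comp (fmap v) (fmap u) }.

Arguments fmap {J C} f {j k}.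

Definition is_poset (C : category) : Prop :=
  (forall (a b : C) (f g : Hom a b), f = g) /\
  (forall (a b : C), Hom a b -> Hom b a -> a = b).

(* Colimits/limits of a diagram given by its object and morphism maps
   (the functor laws play no role in the universal property). *)
Definition is_cocone (J C : category) (D : J -> C)
    (Dm : forall j k, Hom j k -> Hom (D j) (D k))
    (c : C) (lam : forall j, Hom (D j) c) : Prop :=
  forall j k (u : Hom j k), comp (lam k) (Dm j k u) = lam j.

Definition is_colimit_data (J C : category) (D : J -> C)
    (Dm : forall j k, Hom j k -> Hom (D j) (D k))
    (c : C) (lam : forall j, Hom (D j) c) : Prop :=
  is_cocone Dm lam /\
  forall (c' : C) (lam' : forall j, Hom (D j) c'), is_cocone Dm lam' ->
    exists m : Hom c c', (forall j, comp m (lam j) = lam' j) /\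
      forall m' : Hom c c', (forall j, comp m' (lam j) = lam' j) -> m' = m.

Definition is_cone (J C : category) (D : J -> C)
    (Dm : forall j k, Hom j k -> Hom (D j) (D k))
    (c : C) (lam : forall j, Hom c (D j)) : Prop :=
  forall j k (u : Hom j k), comp (Dm j k u) (lam j) = lam k.

Definition is_limit_data (J C : category) (D : J -> C)
    (Dm : forall j k, Hom j k -> Hom (D j) (D k))
    (c : C) (lam : forall j, Hom c (D j)) : Prop :=
  is_cone Dm lam /\
  forall (c' : C) (lam' : forall j, Hom c' (D j)), is_cone Dm lam' ->
    exists m : Hom c' c, (forall j, comp (lam j) m = lam' j) /\
      forall m' : Hom c' c, (forall j, comp (lam j) m' = lam' j) -> m' = m.

Definition is_colimit (J C : category) (D : functor J C) (c : C) (lam : forall j, Hom (D j) c) :=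
  is_colimit_data (fun j k (u : Hom j k) => fmap D u) lam.
Definition is_limit (J C : category) (D : functor J C) (c : C) (lam : forall j, Hom c (D j)) :=
  is_limit_data (fun j k (u : Hom j k) => fmap D u) lam.

Arguments is_colimit {J C} D c lam.
Arguments is_limit {J C} D c lam.

(* Small = indexed by a category living in the universe of [category]. *)
Definition has_small_colimits (C : category) : Prop :=
  forall (J : category) (D : functor J C),
    exists (c : C) (lam : forall j, Hom (D j) c), is_colimit D c lam.

Definition has_small_limits (C : category) : Prop :=
  forall (J : category) (D : functor J C),
    exists (c : C) (lam : forall j, Hom c (D j)), is_limit D c lam.

Definition is_initial (C : category) (i : C) : Prop :=
  forall a : C, exists f : Hom i a, forall g : Hom i a, g = f.
Definition is_terminal (C : category) (t : C) : Prop :=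
  forall a : C, exists f : Hom a t, forall g : Hom a t, g = f.

Definition is_product (C : category) (a b p : C)
    (p1 : Hom p a) (p2 : Hom p b) : Prop :=
  forall (q : C) (f : Hom q a) (g : Hom q b),
    exists h : Hom q p, (comp p1 h = f /\ comp p2 h = g) /\
      forall h' : Hom q p, comp p1 h' = f /\ comp p2 h' = g -> h' = h.

(* Concretely: given a colimit
   (c, lam) of D, a product a x c, products a x D j, the induced maps
   id x D(u) : a x D j -> a x D k and id x lam j : a x D j -> a x c,
   the latter form a colimit of the former diagram. *)
Definition products_distribute_over_colimits (C : category) : Prop :=
  forall (a : C) (J : category) (D : functor J C)
    (c : C) (lam : forall j, Hom (D j) c), is_colimit D c lam ->
  forall (P : J -> C) (p1 : forall j, Hom (P j) a) (p2 : forall j, Hom (P j) (D j)),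
    (forall j, is_product (p1 j) (p2 j)) ->
  forall (Pc : C) (q1 : Hom Pc a) (q2 : Hom Pc c), is_product q1 q2 ->
  forall (Pm : forall j k, Hom j k -> Hom (P j) (P k)),
    (forall j k (u : Hom j k),
        comp (p1 k) (Pm j k u) = p1 j /\
        comp (p2 k) (Pm j k u) = comp (fmap D u) (p2 j)) ->
  forall (mu : forall j, Hom (P j) Pc),
    (forall j, comp q1 (mu j) = p1 j /\ comp q2 (mu j) = comp (lam j) (p2 j)) ->
  is_colimit_data Pm mu.

Section ExplicitTopology.
Variable T : Type.
Implicit Types (tau : set (set T)).

Definition is_topology tau : Prop :=
  tau set0 /\ tau setT /\
  (forall U V, tau U -> tau V -> tau (U `&` V)) /\
  (forall (F : set (set T)), F `<=` tau -> tau (\bigcup_(U in F) U)).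

Definition t_closed tau (A : set T) : Prop := tau (~` A).

Definition t_compact tau (K : set T) : Prop :=
  forall (F : set (set T)), F `<=` tau -> K `<=` \bigcup_(U in F) U ->
    exists G : set (set T), [/\ G `<=` F, finite_set G & K `<=` \bigcup_(U in G) U].

Definition t_hausdorff tau : Prop :=
  forall x y : T, x <> y ->
    exists U V, [/\ tau U, tau V, U x, V y & U `&` V = set0].

Definition t_compactly_generated tau : Prop :=
  forall A : set T,
    (forall K, t_compact tau K -> exists C, t_closed tau C /\ A `&` K = C `&` K) ->
    t_closed tau A.

Definition t_cgh tau : Prop :=
  [/\ is_topology tau, t_hausdorff tau & t_compactly_generated tau].

End ExplicitTopology.

Definition t_continuous (S T : Type) (sig : set (set S)) (tau : set (set T))
    (f : S -> T) : Prop :=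
  forall V, tau V -> sig (f @^-1` V).

Section PointX.
Variable X : topologicalType.

(* The underlying set of * ⊔ X is [option X], with * = None and the
   inclusion X -> * ⊔ X given by Some.  A pointed extension is a CGH
   topology on it whose subspace topology on X is the given one. *)
Definition is_pointed_extension (tau : set (set (option X))) : Prop :=
  t_cgh tau /\
  forall U : set X, open U <-> exists V, tau V /\ U = Some @^-1` V.

Record pext := PExt {
  pext_top : set (set (option X));
  pext_ax : is_pointed_extension pext_top }.

(* The structure map X_+ -> X_* of an object of the undercategory
   Top^{X_+/}: the identity of the underlying set [option X]. *)
Definition plus_to_pext : option X -> option X := id.

Definition pext_hom (A B : pext) : Type :=
  {f : option X -> option X |
     t_continuous (pext_top A) (pext_top B) f /\
     forall z, f (plus_to_pext z) = plus_to_pext z}.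

Lemma pext_hom_eq (A B : pext) (f g : pext_hom A B) :
  proj1_sig f = proj1_sig g -> f = g.
Proof.
case: f g => f hf [g hg] /= e; subst g; by rewrite (proof_irrelevance _ hf hg).
Qed.

Definition pext_id (A : pext) : pext_hom A A.
Proof. exists id; split=> // V hV; by []. Defined.

Lemma pext_comp_ax (A B C : pext) (g : pext_hom B C) (f : pext_hom A B) :
  t_continuous (pext_top A) (pext_top C) (proj1_sig g \o proj1_sig f) /\
  forall z, (proj1_sig g \o proj1_sig f) (plus_to_pext z) = plus_to_pext z.
Proof.
case: f => f [cf hf]; case: g => g [cg hg] /=.
split; first by move=> V hV; exact: (cf _ (cg _ hV)).
by move=> z /=; rewrite hf hg.
Qed.

Definition pext_comp (A B C : pext) (g : pext_hom B C) (f : pext_hom A B) :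
  pext_hom A C := exist _ (proj1_sig g \o proj1_sig f) (pext_comp_ax g f).

Definition Point : category.
Proof.
refine (@Category pext pext_hom pext_id pext_comp _ _ _);
  by move=> *; apply: pext_hom_eq.
Defined.

End PointX.

(* A morphism of Point_X is the identity of * ⊔ X, so Point_X is the poset of
   pointed extensions ordered by coarsening.  The intersection of the
   topologies of any family of pointed extensions is again one: it is
   Hausdorff because compact subsets of X stay closed in it and X is locally
   compact, and compactly generated because coarsening a topology only adds
   compact sets.  With X_+ (with * isolated), the finest pointed extension, this
   makes Point_X a complete lattice.
   For distributivity, let V be open in every a × D_i with * ∈ V, and let C be
   the complement of V in X.  Compact generation reduces openness of V in
   a × colim D_i to compactness of C ∩ K for K compact in a × colim D_i, hence
   to closedness of C ∩ K in every D_i, hence to compactness of C ∩ K ∩ M for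
   M compact in D_i.  This follows from openness of V in the pointed extension
   top(L) whose neighbourhoods of * are the complements of closed sets meeting
   every member of L compactly, L being the family of closed sets (such as
   K ∩ M) meeting the closed sets of a and of D_i compactly: top(L) is finer
   than a and than D_i, hence than a × D_i. *)

From HB Require Import structures.
From mathcomp Require Import all_boot all_order finmap.
From mathcomp Require Import boolp classical_sets functions cardinality topology.
From Stdlib Require Import ProofIrrelevance.

Set Implicit Arguments. Unset Strict Implicit. Unset Printing Implicit Defensive.
Local Open Scope classical_set_scope.

Lemma finite_set_ind T (P : set T -> Prop) : P set0 ->
  (forall A x, finite_set A -> P A -> P (x |` A)) ->
  forall A, finite_set A -> P A.
Proof.
move=> P0 PS A /finite_setP [n]; elim: n A => [A|n IH A].
  by rewrite II0 card_eq0 => /eqP ->.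
move=> /eq_cardSP [x Ax HA]; rewrite -(setD1K Ax); apply: PS.
  by apply/finite_setP; exists n.
exact: IH.
Qed.

Lemma finite_choice A B (P : set A) (R : A -> B -> Prop) : finite_set P ->
  (forall a, P a -> exists b, R a b) ->
  exists Q : set B, [/\ finite_set Q, (forall b, Q b -> exists2 a, P a & R a b)
     & (forall a, P a -> exists2 b, Q b & R a b)].
Proof.
move=> fP; move: P fP; apply: finite_set_ind.
  by move=> _; exists set0; split => // a [].
move=> P x fP IH H.
have [|Q [fQ H1 H2]] := IH; first by move=> a Pa; apply: H; right.
have [b0 Rb0] := H x (or_introl erefl).
exists (b0 |` Q); split.
- by rewrite finite_setU; split => //; exact: finite_set1.
- move=> b [->|Qb]; first by exists x => //; left.
  by have [a Pa Rab] := H1 _ Qb; exists a => //; right.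
- move=> a [->|Pa]; first by exists b0 => //; left.
  by have [b Qb Rab] := H2 _ Pa; exists b => //; right.
Qed.

Section ExplicitTopology.
Variable T : Type.
Implicit Types (tau sig : set (set T)) (K A : set T).

Lemma t_compact_coarser sig tau K : sig `<=` tau ->
  t_compact tau K -> t_compact sig K.
Proof.
move=> st cK F Fs KF; have [G [GF fG KG]] := cK F (subset_trans Fs st) KF.
by exists G.
Qed.

Lemma t_compactU tau A K : t_compact tau A -> t_compact tau K ->
  t_compact tau (A `|` K).
Proof.
move=> cA cK F Ft AKF.
have [G1 [G1F fG1 AG1]] := cA F Ft (fun x Ax => AKF x (or_introl Ax)).
have [G2 [G2F fG2 KG2]] := cK F Ft (fun x Kx => AKF x (or_intror Kx)).
exists (G1 `|` G2); split.
- by move=> V [/G1F|/G2F].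
- by rewrite finite_setU.
- by move=> x [/AG1 [V GV Vx]|/KG2 [V GV Vx]]; exists V => //; [left|right].
Qed.

Lemma t_compact_closedI tau K A : t_compact tau K -> t_closed tau A ->
  t_compact tau (K `&` A).
Proof.
move=> cK cA F Ft KF.
have H1 : ~` A |` F `<=` tau by move=> V [->|FV]; [exact: cA | exact: Ft].
have H2 : K `<=` \bigcup_(U in ~` A |` F) U.
  move=> x Kx; have [Ax|nAx] := pselect (A x).
    by have [V FV Vx] := KF x (conj Kx Ax); exists V => //; right.
  by exists (~` A) => //; left.
have [G [GF fG KG]] := cK _ H1 H2.
exists (G `&` F); split.
- by move=> V [].
- exact: finite_setIl.
- move=> x [Kx Ax]; have [V GV Vx] := KG x Kx.
  have /GF [VA|FV] := GV; first by rewrite VA in Vx.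
  by exists V.
Qed.

Lemma t_nbhs_disjoint_finite_bigcup tau (G : set (set T)) (x : T) :
  is_topology tau -> finite_set G ->
  (forall V, G V -> exists U, [/\ tau U, U x & U `&` V = set0]) ->
  exists W, [/\ tau W, W x & W `&` \bigcup_(V in G) V = set0].
Proof.
move=> [_ [tT [tI _]]]; move: G; apply: finite_set_ind.
  by move=> _; exists setT; split => //; rewrite bigcup_set0 setI0.
move=> G V fG IH GU.
have [|W [tW Wx WG]] := IH; first by move=> V' GV'; apply: GU; right.
have [U [tU Ux UV]] := GU V (or_introl erefl).
exists (W `&` U); split => //; first exact: tI.
rewrite bigcup_setU1 setIUr setU_eq0; split; first by rewrite -setIA UV setI0.
by rewrite setIAC WG set0I.
Qed.

Lemma t_compact_closed tau K : is_topology tau -> t_hausdorff tau ->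
  t_compact tau K -> t_closed tau K.
Proof.
move=> tauT hT cK.
rewrite /t_closed; have -> : ~` K = \bigcup_(W in [set W | tau W /\ W `<=` ~` K]) W.
  rewrite eqEsubset; split; last by move=> x [W [_ WK] Wx]; exact: WK.
  move=> x nKx.
  pose F := [set V | tau V /\ exists U, [/\ tau U, U x & U `&` V = set0]].
  have KF : K `<=` \bigcup_(U in F) U.
    move=> y Ky; have xy : x <> y by move=> e; rewrite e in nKx.
    have [U [V [tU tV Ux Vy UV]]] := hT x y xy.
    by exists V => //; split => //; exists U.
  have [G [GF fG KG]] := cK F (fun V (FV : F V) => FV.1) KF.
  have [W [tW Wx WG]] := t_nbhs_disjoint_finite_bigcup tauT fG (fun V GV => (GF V GV).2).
  exists W => //; split => // z Wz Kz.
  have [V GV Vz] := KG z Kz.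
  have : (W `&` \bigcup_(V in G) V) z by split => //; exists V.
  by rewrite WG.
by case: tauT => _ [_ [_ tU]]; apply: tU => W [].
Qed.

End ExplicitTopology.

Section ThinCategory.
Variable C : category.
Hypothesis thinC : forall (a b : C) (f g : Hom a b), f = g.

Lemma thin_cocone (J : category) (D : J -> C)
    (Dm : forall j k, Hom j k -> Hom (D j) (D k)) (c : C)
    (lam : forall j, Hom (D j) c) : is_cocone Dm lam.
Proof. by move=> j k u; exact: thinC. Qed.

Lemma thin_colimit (J : category) (D : J -> C)
    (Dm : forall j k, Hom j k -> Hom (D j) (D k)) (c : C)
    (lam : forall j, Hom (D j) c) :
  (forall c', (forall j, Hom (D j) c') -> Hom c c') -> is_colimit_data Dm lam.
Proof.
move=> univ; split=> [|c' lam' _]; first exact: thin_cocone.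
by exists (univ c' lam'); split=> [j|m' _]; exact: thinC.
Qed.

Lemma thin_limit (J : category) (D : J -> C)
    (Dm : forall j k, Hom j k -> Hom (D j) (D k)) (c : C)
    (lam : forall j, Hom c (D j)) :
  (forall c', (forall j, Hom c' (D j)) -> Hom c' c) -> is_limit_data Dm lam.
Proof.
move=> univ; split=> [j k u|c' lam' _]; first exact: thinC.
by exists (univ c' lam'); split=> [j|m' _]; exact: thinC.
Qed.

Lemma thin_initial (i : C) : (forall a, Hom i a) -> is_initial i.
Proof. by move=> univ a; exists (univ a) => g; exact: thinC. Qed.

Lemma thin_terminal (t : C) : (forall a, Hom a t) -> is_terminal t.
Proof. by move=> univ a; exists (univ a) => g; exact: thinC. Qed.

End ThinCategory.

Definition pointed_at (X : topologicalType) (x : X) : Type := X.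
HB.instance Definition _ (X : topologicalType) (x : X) :=
  Topological.on (@pointed_at X x).
HB.instance Definition _ (X : topologicalType) (x : X) :=
  isPointed.Build (@pointed_at X x) x.

Section PointedExtensions.
Variable X : topologicalType.
Notation tc := (t_compact (@open X)).
Implicit Types (S C D U : set X) (V K M : set (option X))
  (tau : set (set (option X))).

Lemma t_closedE S : t_closed (@open X) S = closed S.
Proof. by rewrite /t_closed openC. Qed.

Lemma compact_t_compact S : compact S -> tc S.
Proof.
move=> cS F Fo SF.
have [->|/set0P [x Sx]] := eqVneq S set0.
  by exists set0; split; [move=> ? [] | exact: finite_set0 | move=> ? []].
(* [compact_cover] needs a pointed type, whence the copy of X pointed at x. *)
have cS' : @cover_compact (@pointed_at X x) S by rewrite -compact_cover.
have [D' sD SD] := cS' (set X) F id Fo SF.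
exists [set` D']; split.
- by move=> V /= VD; have /set_mem := sD V VD.
- exact: finite_fset.
- by move=> y /SD [V VD Vy]; exists V.
Qed.

Lemma tc_closedI S C : tc S -> closed C -> tc (S `&` C).
Proof. by move=> cS cC; apply: t_compact_closedI; rewrite ?t_closedE. Qed.

Lemma preimage_image_some S : Some @^-1` (Some @` S) = S.
Proof. by rewrite eqEsubset; split => [x [y Sy [<-]]|x Sx] //; exists x. Qed.

Lemma preimage_some_setC_image S : Some @^-1` (~` (Some @` S)) = ~` S.
Proof. by rewrite -preimage_setC preimage_image_some. Qed.

Lemma setI_image_some K D : K `&` Some @` D = Some @` (Some @^-1` K `&` D).
Proof.
rewrite eqEsubset; split; first by move=> x [Kx [y Dy eyx]]; subst x; exists y.
by move=> _ [y [Ky Dy] <-]; split => //; exists y.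
Qed.

Lemma image_preimage_some V : ~ V None -> Some @` (Some @^-1` V) = V.
Proof.
move=> nV; rewrite eqEsubset; split; first by move=> _ [y Vy <-].
by move=> [y|] Vy //; exists y.
Qed.

Lemma setC_image_some_setC_preimage V :
  V None -> ~` (Some @` (~` (Some @^-1` V))) = V.
Proof.
move=> VN; rewrite eqEsubset; split; last by move=> x Vx [y nVy eyx]; subst x.
by move=> [y|] h //; apply: contrapT => nVy; apply: h; exists y.
Qed.

Definition some_open_embedding tau : Prop :=
  (forall U, open U -> tau (Some @` U)) /\
  (forall V, tau V -> open (Some @^-1` V)).

Lemma t_compact_image_some tau S : some_open_embedding tau ->
  t_compact tau (Some @` S) <-> tc S.
Proof.
move=> [eo ep]; split=> cS F Fo SF.
- have H1 : [set Some @` U | U in F] `<=` tau.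
    by move=> _ [U FU <-]; apply: eo; apply: Fo.
  have H2 : Some @` S `<=` \bigcup_(V in [set Some @` U | U in F]) V.
    move=> _ [x Sx <-]; have [U FU Ux] := SF x Sx.
    by exists (Some @` U); [exists U | exists x].
  have [G [GF fG SG]] := cS _ H1 H2.
  exists [set U | F U /\ G (Some @` U)]; split.
  + by move=> U [].
  + apply: (sub_finite_set (B := [set Some @^-1` V | V in G])); last first.
      exact: finite_image.
    by move=> U [FU GU]; exists (Some @` U) => //; rewrite preimage_image_some.
  + move=> x Sx; have [V GV Vx] := SG (Some x) (ex_intro2 _ _ x Sx erefl).
    have [U FU eV] := GF V GV; subst V.
    by exists U; [split | move: Vx => [y Uy [<-]]].
- have H1 : [set Some @^-1` V | V in F] `<=` @open X.
    by move=> _ [V FV <-]; apply: ep; apply: Fo.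
  have H2 : S `<=` \bigcup_(U in [set Some @^-1` V | V in F]) U.
    move=> x Sx; have [V FV Vx] := SF (Some x) (ex_intro2 _ _ x Sx erefl).
    by exists (Some @^-1` V) => //; exists V.
  have [G [GF fG SG]] := cS _ H1 H2.
  have [Q [fQ Q1 Q2]] := @finite_choice _ _ _
     (fun U V => F V /\ U = Some @^-1` V) fG
     (fun U GU => let: ex_intro2 V FV e := GF U GU in
                  ex_intro _ V (conj FV (esym e))).
  exists Q; split => //; first by move=> V /Q1 [U _ []].
  move=> _ [x Sx <-]; have [U GU Ux] := SG x Sx.
  by have [V QV [_ e]] := Q2 U GU; exists V => //; rewrite e in Ux.
Qed.

Lemma t_open_setC_none tau : is_topology tau -> t_hausdorff tau ->
  tau (~` [set None]).
Proof.
move=> [_ [_ [_ tU]]] hT.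
have -> : ~` [set None] = \bigcup_(V in [set V | tau V /\ ~ V None]) V.
  rewrite eqEsubset; split; last by move=> x [V [_ nV] Vx] xN; rewrite xN in Vx.
  move=> x xN; have [U [V [tU' tV Ux VN UV]]] := hT x None xN.
  exists U => //; split => // UN.
  by have : (U `&` V) None by []; rewrite UV.
by apply: tU => V [].
Qed.

Hypothesis hlc : locally_compact [set: X].
Hypothesis hT2 : hausdorff_space X.

Lemma open_t_hausdorff : t_hausdorff (@open X).
Proof.
move=> x y xy; move: hT2; rewrite open_hausdorff => /(_ x y).
have /[swap]/[apply] : x != y by apply/eqP.
move=> [[U V] /= [xU yV] [oU oV /eqP UV]].
by exists U, V; split => //; [move: xU | move: yV] => /set_mem.
Qed.

Lemma tc_closed S : tc S -> closed S.
Proof.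
move=> cS; rewrite -t_closedE; apply: t_compact_closed cS => //.
  split; [exact: open0 | split; [exact: openT | split]].
    by move=> U1 U2; exact: openI.
  by move=> F FO; apply: bigcup_open.
exact: open_t_hausdorff.
Qed.

Lemma tc_nbhs (x : X) : exists U S, [/\ open U, U x, U `<=` S & tc S].
Proof.
have := hlc (I : setT x); rewrite withinET => -[S nS [cS _]].
move: nS; rewrite nbhsE => -[U [oU Ux] US].
by exists U, S; split => //; exact: compact_t_compact.
Qed.

(* Separating [Some x] from [None] uses a compact neighbourhood of [x]. *)
Lemma t_hausdorff_some tau : some_open_embedding tau ->
  (forall S, tc S -> tau (~` (Some @` S))) -> t_hausdorff tau.
Proof.
move=> [eo ep] hK.
have sepN (a : X) : exists V W,
    [/\ tau V, tau W, V (Some a), W None & V `&` W = set0].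
  have [B [S [oB Ba BS cS]]] := tc_nbhs a.
  exists (Some @` B), (~` (Some @` S)); split.
  - exact: eo.
  - exact: hK.
  - by exists a.
  - by move=> [].
  - by rewrite -subset0 => _ [[x Bx <-] /=]; apply; exists x => //; apply: BS.
move=> [a|] [b|] ab.
- have ab' : a <> b by move=> e; apply: ab; rewrite e.
  have [U [V [oU oV Ua Vb UV]]] := open_t_hausdorff ab'.
  exists (Some @` U), (Some @` V); split; try exact: eo; [by exists a|by exists b|].
  rewrite -subset0 => _ [[x Ux <-] [y Vy [e]]]; subst y.
  by have : (U `&` V) x by []; rewrite UV.
- exact: sepN.
- have [V [W [tV tW Vb WN VW]]] := sepN b.
  by exists W, V; split => //; rewrite setIC.
- by exfalso; apply: ab.
Qed.

(* The local compactness of [X] reduces closedness to compact traces. *)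
Lemma closed_preimage_some_of_traces tau (A : set (option X)) :
  some_open_embedding tau ->
  (forall K, t_compact tau K -> exists W, t_closed tau W /\ A `&` K = W `&` K) ->
  closed (Some @^-1` A).
Proof.
move=> eo H; rewrite -openC openE => x nAx.
have [B [K [oB Bx BK cK]]] := tc_nbhs x.
have [W [tW AW]] := H _ ((t_compact_image_some _ eo).2 cK).
have oW : open (~` (Some @^-1` W)) by rewrite preimage_setC; exact: eo.2.
rewrite /interior nbhsE /=; exists (B `&` ~` (Some @^-1` W)); first split.
- exact: openI.
- split => // Wx; apply: nAx.
  have : (W `&` (Some @` K)) (Some x) by split => //; exists x => //; exact: BK.
  by rewrite -AW => -[].
- move=> y [By nWy] Ay; apply: nWy.
  have : (A `&` (Some @` K)) (Some y) by split => //; exists y => //; exact: BK.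
  by rewrite AW => -[].
Qed.

Lemma pext_topology (B : pext X) : is_topology (pext_top B).
Proof. by case: B => ? [[]]. Qed.

Lemma pext_hausdorff (B : pext X) : t_hausdorff (pext_top B).
Proof. by case: B => ? [[]]. Qed.

Lemma pext_compactly_generated (B : pext X) :
  t_compactly_generated (pext_top B).
Proof. by case: B => ? [[]]. Qed.

Lemma pext_some_open_embedding (B : pext X) : some_open_embedding (pext_top B).
Proof.
case: B => tau [[tT hT _] ext] /=; split; last by move=> V tV; apply/ext; exists V.
move=> U /ext [V [tV ->]].
have -> : Some @` (Some @^-1` V) = V `&` ~` [set None].
  rewrite eqEsubset; split; first by move=> _ [x Vx <-].
  by move=> [x|] [Vx nN]; [exists x | exfalso; apply: nN].
by case: tT (t_open_setC_none tT hT) => [_ [_ [tI _]]]; exact: tI.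
Qed.

Lemma pext_closed_image (B : pext X) S : tc S -> t_closed (pext_top B) (Some @` S).
Proof.
move=> cS; apply: t_compact_closed; [exact: pext_topology | exact: pext_hausdorff|].
by apply/t_compact_image_some => //; exact: pext_some_open_embedding.
Qed.

Lemma closed_preimage_some (B : pext X) K :
  t_compact (pext_top B) K -> closed (Some @^-1` K).
Proof.
move=> cK; have := t_compact_closed (pext_topology B) (pext_hausdorff B) cK.
by move=> /(pext_some_open_embedding B).2; rewrite preimage_setC openC.
Qed.

Lemma tc_preimage_some_closedI (B : pext X) K C :
  t_compact (pext_top B) K -> t_closed (pext_top B) (Some @` C) ->
  tc (Some @^-1` K `&` C).
Proof.
move=> cK cC; have := t_compact_closedI cK cC; rewrite setI_image_some.
by move/t_compact_image_some; apply; exact: pext_some_open_embedding.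
Qed.

(* Compact sets avoiding [None] lie in the open copy of [X], where [Some @` C]
   is relatively closed, so only those through [None] need a hypothesis. *)
Lemma closed_image_some (B : pext X) C : closed C ->
  (forall K, t_compact (pext_top B) K -> K None -> tc (Some @^-1` K `&` C)) ->
  t_closed (pext_top B) (Some @` C).
Proof.
move=> clC HC; apply: pext_compactly_generated => K cK.
have [KN|nKN] := pselect (K None).
  exists (Some @` (Some @^-1` K `&` C)); split; first exact: pext_closed_image (HC K cK KN).
  by rewrite [LHS]setIC [RHS]setIC !setI_image_some setIA setIid.
exists (~` (Some @` (~` C))); split.
  rewrite /t_closed setCK; apply: (pext_some_open_embedding B).1.
  by rewrite openC.
rewrite eqEsubset; split => -[y|] [h Ky] //; split => //.
- by move=> [z nCz [e]]; subst z; move: h => [z Cz [e]]; subst z.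
- by exists y => //; apply: contrapT => nCy; apply: h; exists y.
Qed.

(* The order of [Point X]: there is a morphism [A -> B] iff [A] is finer than
   [B], so colimits are suprema, computed by intersecting topologies. *)
Definition pext_le (A B : pext X) : Prop := pext_top B `<=` pext_top A.

Lemma pext_hom_le (A B : pext X) : pext_hom A B -> pext_le A B.
Proof.
case=> f [cf hf] V BV.
have ef : f = id by apply: funext => z; exact: (hf z).
by have := cf V BV; rewrite ef.
Qed.

Definition pext_le_hom (A B : pext X) (AB : pext_le A B) : pext_hom A B :=
  exist _ id (conj AB (fun z => erefl)).

Lemma pext_hom_thin (A B : pext X) (f g : pext_hom A B) : f = g.
Proof.
case: f => f [cf hf]; case: g => g [cg hg]; apply: pext_hom_eq => /=.
by apply: funext => z; rewrite (hf z) (hg z).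
Qed.

Lemma pext_le_anti (A B : pext X) : pext_le A B -> pext_le B A -> A = B.
Proof.
case: A => tA hA; case: B => tB hB /= AB BA.
have e : tA = tB by rewrite eqEsubset.
by subst tB; rewrite (proof_irrelevance _ hA hB).
Qed.

Definition compactly_meeting (Lf : set (set X)) C : Prop :=
  closed C /\ forall L, Lf L -> tc (C `&` L).

Definition topL (Lf : set (set X)) : set (set (option X)) :=
  [set V | open (Some @^-1` V) /\
           (V None -> compactly_meeting Lf (~` (Some @^-1` V)))].

Section TopL.
Variable Lf : set (set X).
Hypothesis closed_Lf : forall L, Lf L -> closed L.

Lemma compactly_meeting_sub C D : compactly_meeting Lf C -> closed D ->
  D `<=` C -> compactly_meeting Lf D.
Proof.
move=> [cC HC] cD DC; split => // L LL.
by rewrite -(setIidl DC) [D `&` C]setIC setIAC; exact: tc_closedI (HC L LL) cD.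
Qed.

Lemma compactly_meetingU C D : compactly_meeting Lf C -> compactly_meeting Lf D ->
  compactly_meeting Lf (C `|` D).
Proof.
move=> [cC HC] [cD HD]; split; first exact: closedU.
by move=> L LL; rewrite setIUl; apply: t_compactU; [exact: HC | exact: HD].
Qed.

Lemma compactly_meeting_tc S : tc S -> compactly_meeting Lf S.
Proof.
move=> cS; split; first exact: tc_closed.
by move=> L /closed_Lf; exact: tc_closedI.
Qed.

Lemma topL_topology : is_topology (topL Lf).
Proof.
split; first by split => //; rewrite preimage_set0; exact: open0.
split.
  rewrite /topL /= preimage_setT setCT; split => [|_]; first exact: openT.
  apply: compactly_meeting_tc => F _ _.
  by exists set0; split; [move=> ? [] | exact: finite_set0 | move=> ? []].
split.
  move=> U V [oU HU] [oV HV]; split; first by rewrite preimage_setI; exact: openI.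
  by move=> [UN VN]; rewrite preimage_setI setCI; exact: compactly_meetingU (HU UN) (HV VN).
move=> F Ft; split.
  by rewrite preimage_bigcup; apply: bigcup_open => V /Ft [].
move=> [V0 FV0 V0N]; have [oV0 HV0] := Ft V0 FV0.
apply: (compactly_meeting_sub (HV0 V0N)).
  by rewrite closedC preimage_bigcup; apply: bigcup_open => V /Ft [].
by move=> x nx V0x; apply: nx; exists V0.
Qed.

Lemma topL_some_open_embedding : some_open_embedding (topL Lf).
Proof.
split; last by move=> V [].
by move=> U oU; split; [rewrite preimage_image_some | case].
Qed.

Lemma topL_hausdorff : t_hausdorff (topL Lf).
Proof.
apply: (t_hausdorff_some topL_some_open_embedding) => S cS; split.
  by rewrite preimage_some_setC_image openC; exact: tc_closed.
by move=> _; rewrite preimage_some_setC_image setCK; exact: compactly_meeting_tc.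
Qed.

Lemma topL_compact L : Lf L -> t_compact (topL Lf) (None |` Some @` L).
Proof.
move=> LL F Ft KF.
have [U0 FU0 U0N] := KF None (or_introl erefl).
have [oU0 HU0] := Ft U0 FU0; have [_ HC0] := HU0 U0N.
have H1 : [set Some @^-1` V | V in F] `<=` @open X.
  by move=> _ [V FV <-]; have [] := Ft V FV.
have H2 : ~` (Some @^-1` U0) `&` L `<=`
          \bigcup_(U in [set Some @^-1` V | V in F]) U.
  move=> x [_ Lx].
  have [V FV Vx] := KF (Some x) (or_intror (ex_intro2 _ _ x Lx erefl)).
  by exists (Some @^-1` V) => //; exists V.
have [G [GF fG SG]] := HC0 L LL _ H1 H2.
have [Q [fQ Q1 Q2]] := @finite_choice _ _ _
   (fun U V => F V /\ U = Some @^-1` V) fG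
   (fun U GU => let: ex_intro2 V FV e := GF U GU in
                ex_intro _ V (conj FV (esym e))).
exists (U0 |` Q); split.
- by move=> V [->|/Q1 [W _ []]].
- by rewrite finite_setU; split => //; exact: finite_set1.
- move=> _ [->|[x Lx <-]]; first by exists U0 => //; left.
  have [U0x|nU0x] := pselect (U0 (Some x)); first by exists U0 => //; left.
  have [W GW Wx] := SG x (conj nU0x Lx).
  have [V QV [_ e]] := Q2 W GW; exists V; first by right.
  by rewrite e in Wx.
Qed.

Lemma topL_compactly_generated : t_compactly_generated (topL Lf).
Proof.
move=> A H.
have clA := closed_preimage_some_of_traces topL_some_open_embedding H.
split; first by rewrite -preimage_setC openC.
move=> nAN; rewrite preimage_setC setCK; split => // L LL.
have [C [tC AC]] := H _ (topL_compact LL).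
have nCN : ~ C None.
  move=> CN; apply: nAN.
  have : (C `&` (None |` Some @` L)) None by split => //; left.
  by rewrite -AC => -[].
have [_ /(_ nCN) [_]] := tC; move=> /(_ L LL); rewrite preimage_setC setCK.
suff -> : Some @^-1` C `&` L = Some @^-1` A `&` L by [].
rewrite eqEsubset; split => y [h Ly]; split => //.
  have : (C `&` (None |` Some @` L)) (Some y) by split => //; right; exists y.
  by rewrite -AC => -[].
have : (A `&` (None |` Some @` L)) (Some y) by split => //; right; exists y.
by rewrite AC => -[].
Qed.

Lemma topL_is_pext : is_pointed_extension (topL Lf).
Proof.
split; first by split; [exact: topL_topology | exact: topL_hausdorff |
  exact: topL_compactly_generated].
move=> U; split; last by move=> [V [[oV _] ->]].
move=> oU; exists (Some @` U); split; last by rewrite preimage_image_some.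
exact: topL_some_open_embedding.1.
Qed.

End TopL.

Definition pext_topL (Lf : set (set X)) (closed_Lf : forall L, Lf L -> closed L) :
  pext X := PExt (topL_is_pext closed_Lf).

Lemma pext_topL_le (Lf : set (set X)) (closed_Lf : forall L, Lf L -> closed L)
    (B : pext X) :
  (forall L, Lf L -> forall D, t_closed (pext_top B) (Some @` D) -> tc (L `&` D)) ->
  pext_le (pext_topL closed_Lf) B.
Proof.
move=> HB V BV; have oV := (pext_some_open_embedding B).2 V BV.
split => // VN; split; first by rewrite closedC.
move=> L LL; rewrite setIC; apply: HB => //.
by rewrite /t_closed setC_image_some_setC_preimage.
Qed.

(* [X_+], where [None] is isolated. *)
Definition pext_plus : pext X := pext_topL (fun L (L0 : set0 L) => False_ind _ L0).

Lemma pext_plus_le (B : pext X) : pext_le pext_plus B.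
Proof.
move=> V BV; have oV := (pext_some_open_embedding B).2 V BV.
by split => // _; split => [|L []]; rewrite closedC.
Qed.

Lemma pext_plus_closed_image S : closed S -> t_closed (pext_top pext_plus) (Some @` S).
Proof.
move=> cS; split; first by rewrite preimage_some_setC_image openC.
by move=> _; rewrite preimage_some_setC_image setCK; split => // L [].
Qed.

(* Throwing in [X_+], the finest pointed extension, changes nothing unless [P]
   is empty, in which case it provides the topology of the least element. *)
Definition pext_sup_top (P : set (pext X)) : set (set (option X)) :=
  \bigcap_(B in pext_plus |` P) pext_top B.

Lemma pext_sup_is_pext P : is_pointed_extension (pext_sup_top P).
Proof.
have eo : some_open_embedding (pext_sup_top P).
  split=> [U oU B _|V SV]; first exact: (pext_some_open_embedding B).1.
  exact: (pext_some_open_embedding pext_plus).2 (SV pext_plus (or_introl erefl)).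
split; last first.
  move=> U; split=> [oU|[V [SV ->]]]; last exact: eo.2.
  by exists (Some @` U); split; [exact: eo.1 | rewrite preimage_image_some].
split.
- split; first by move=> B _; case: (pext_topology B).
  split; first by move=> B _; case: (pext_topology B) => _ [].
  split=> [U V SU SV B PB|F FS B PB].
    by case: (pext_topology B) => _ [_ [tI _]]; apply: tI; [exact: SU | exact: SV].
  by case: (pext_topology B) => _ [_ [_ tU]]; apply: tU => V /FS; apply.
- by apply: (t_hausdorff_some eo) => S cS B _; exact: pext_closed_image.
- move=> A H B PB; apply: pext_compactly_generated => K cK.
  have [C [SC AC]] := H K (t_compact_coarser (fun V SV => SV B PB) cK).
  by exists C; split => //; exact: SC.
Qed.

Definition pext_sup (P : set (pext X)) : pext X := PExt (pext_sup_is_pext P).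

Lemma pext_sup_ub (P : set (pext X)) B : P B -> pext_le B (pext_sup P).
Proof. by move=> PB V SV; apply: SV; right. Qed.

Lemma pext_sup_least (P : set (pext X)) B :
  (forall B', P B' -> pext_le B' B) -> pext_le (pext_sup P) B.
Proof. by move=> H V BV B' [->|/H B'B]; [exact: pext_plus_le BV | exact: B'B BV]. Qed.

(* [V] is open in the [topL] of the closed sets meeting every closed set of
   [a] and of [b] compactly, a pointed extension finer than [a] and [b]. *)
Lemma meet_compact_trace (a b : pext X) V K M :
  (forall q, pext_le q a -> pext_le q b -> pext_top q V) -> V None ->
  t_compact (pext_top a) K -> t_compact (pext_top b) M ->
  tc (~` (Some @^-1` V) `&` (Some @^-1` K `&` Some @^-1` M)).
Proof.
move=> HV VN cK cM.
set L := Some @^-1` K; set N := Some @^-1` M.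
pose Lf := [set L' | [/\ closed L',
  forall D, t_closed (pext_top a) (Some @` D) -> tc (L' `&` D) &
  forall D, t_closed (pext_top b) (Some @` D) -> tc (L' `&` D)]].
have closed_Lf L' : Lf L' -> closed L' by case.
have [_ /(_ VN) [_]] : pext_top (pext_topL closed_Lf) V.
  by apply: HV; apply: pext_topL_le => L' [].
apply; split.
- exact: closedI (closed_preimage_some cK) (closed_preimage_some cM).
- move=> D aD; rewrite setIAC.
  exact: tc_closedI (tc_preimage_some_closedI cK aD) (closed_preimage_some cM).
- move=> D bD; rewrite -setIA setIC.
  exact: tc_closedI (tc_preimage_some_closedI cM bD) (closed_preimage_some cK).
Qed.

Lemma pext_meet_sup_open (I : Type) (a T : pext X) (D : I -> pext X) V :
  pext_le T a -> pext_le T (pext_sup (range D)) -> open (Some @^-1` V) ->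
  (forall i q, pext_le q a -> pext_le q (D i) -> pext_top q V) -> pext_top T V.
Proof.
move=> Ta TS oV HV.
have [VN|nVN] := pselect (V None); last first.
  by rewrite -(image_preimage_some nVN); exact: (pext_some_open_embedding T).1.
rewrite -(setC_image_some_setC_preimage VN); set C := ~` (Some @^-1` V).
have clC : closed C by rewrite closedC.
apply: closed_image_some => // K cK _; set L := Some @^-1` K.
have clL : closed L := closed_preimage_some cK.
suff clS : t_closed (pext_top (pext_sup (range D))) (Some @` (L `&` C)).
  have := tc_preimage_some_closedI (t_compact_coarser TS cK) clS.
  by rewrite setIA setIid.
move=> B [->|[i _ <-]]; first by apply: pext_plus_closed_image; exact: closedI.
apply: closed_image_some => [|M cM _]; first exact: closedI.
have -> : Some @^-1` M `&` (L `&` C) = C `&` (L `&` Some @^-1` M).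
  by rewrite setIC setIA [C `&` L]setIC.
exact: meet_compact_trace (HV i) VN (t_compact_coarser Ta cK) cM.
Qed.

End PointedExtensions.

Section PointX.
Variable X : topologicalType.
Hypothesis hlc : locally_compact [set: X].
Hypothesis hT2 : hausdorff_space X.

Lemma Point_thin (a b : Point X) (f g : Hom a b) : f = g.
Proof. exact: pext_hom_thin. Qed.

Lemma Point_poset : is_poset (Point X).
Proof.
split=> [|a b f g]; first exact: Point_thin.
by apply: pext_le_anti; exact: pext_hom_le.
Qed.

Lemma Point_has_colimits : has_small_colimits (Point X).
Proof.
move=> J D; pose c := pext_sup hlc hT2 (range D).
exists c, (fun j => pext_le_hom (pext_sup_ub (imageP D (I : setT j)))).
apply: (thin_colimit Point_thin) => c' lam'.
by apply/pext_le_hom/pext_sup_least => _ [j _ <-]; exact: pext_hom_le (lam' j).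
Qed.

Lemma Point_initial : is_initial (pext_plus hlc hT2 : Point X).
Proof.
by apply: (thin_initial Point_thin) => a; exact/pext_le_hom/pext_plus_le.
Qed.

Lemma Point_has_limits : has_small_limits (Point X).
Proof.
move=> J D; pose c := pext_sup hlc hT2 [set B | forall j, pext_le B (D j)].
exists c, (fun j => pext_le_hom (pext_sup_least (fun B PB => PB j))).
apply: (thin_limit Point_thin) => c' lam'.
by apply/pext_le_hom/pext_sup_ub => j; exact: pext_hom_le (lam' j).
Qed.

Lemma Point_terminal : is_terminal (pext_sup hlc hT2 setT : Point X).
Proof.
by apply: (thin_terminal Point_thin) => a; exact/pext_le_hom/pext_sup_ub.
Qed.

Lemma Point_product_le (a b p : Point X) (p1 : Hom p a) (p2 : Hom p b) q :
  is_product p1 p2 -> pext_le q a -> pext_le q b -> pext_le q p.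
Proof.
move=> prod qa qb; have [h _] := prod q (pext_le_hom qa) (pext_le_hom qb).
exact: pext_hom_le h.
Qed.

Lemma Point_colimit_le (J : category) (D : functor J (Point X)) c lam :
  is_colimit D c lam -> pext_le c (pext_sup hlc hT2 (range D)).
Proof.
move=> [_ univ].
have ub j : Hom (D j) (pext_sup hlc hT2 (range D) : Point X).
  exact/pext_le_hom/pext_sup_ub/imageP.
have [m _] := univ _ ub (thin_cocone Point_thin _ ub).
exact: pext_hom_le m.
Qed.

Lemma Point_distributive : products_distribute_over_colimits (Point X).
Proof.
move=> a J D c lam col P p1 p2 prod Pc q1 q2 _ Pm _ mu _.
apply: (thin_colimit Point_thin) => c' lam'.
apply: pext_le_hom => V c'V.
apply: (pext_meet_sup_open (D := D)).
- exact: pext_hom_le q1.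
- exact: subset_trans (Point_colimit_le col) (pext_hom_le q2).
- exact: (pext_some_open_embedding c').2.
- move=> j q qa qD.
  exact: (Point_product_le (prod j) qa qD (pext_hom_le (lam' j) c'V)).
Qed.

End PointX.

Unset Implicit Arguments.

Theorem mainTheorem9 (X : topologicalType)
    (hX_lc : locally_compact [set: X]) (hX_T2 : hausdorff_space X) :
  is_poset (Point X) /\
  (has_small_colimits (Point X) /\ exists i : Point X, is_initial i) /\
  (has_small_limits (Point X) /\ exists t : Point X, is_terminal t) /\
  products_distribute_over_colimits (Point X).
Proof.
split; first exact: Point_poset.
split; first by split; [exact: Point_has_colimits | eexists; exact: Point_initial].
split; first by split; [exact: Point_has_limits | eexists; exact: Point_terminal].
exact: Point_distributive.
Qed.
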